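(* Let $k\ge4$, $t:=\lfloor(k-1)/2\rfloor$, and let $\mathcal{H}$ be a $(t,3k)$-superfull $3$-graph containing two disjoint sets $W_1,W_2\subseteq V(\mathcal{H})$, each of size at least $3k$, such that every pair $(w_1,w_2)\in W_1\times W_2$ has codegree exactly $t$ in $\mathcal{H}$. If $\mathcal{H}$ contains no copy of $C_k^3$, then there exists a $t$-set $L\subseteq V(\mathcal{H})\setminus(W_1\cup W_2)$ such that $N_{\mathcal{H}}(w_1w_2)=L$ for all pairs $(w_1,w_2)\in W_1\times W_2$.
   Context: For a $3$-graph $\mathcal{H}$: $\partial\mathcal{H}$ is the graph of pairs contained in some edge; $N_{\mathcal{H}}(uv)=\{w: uvw\in\mathcal{H}\}$ and the codegree is $d_{\mathcal{H}}(uv)=|N_{\mathcal{H}}(uv)|$. $\mathcal{H}$ is $d$-full if $d_{\mathcal{H}}(uv)\ge d$ for all $uv\in\partial\mathcal{H}$, and $(d,K)$-superfull if it is $d$-full and every edge of $\mathcal{H}$ contains at most one pair of vertices with codegree less than $K$. $C_k^3$ is the expansion of the $k$-cycle: add to each edge of $C_k$ a new vertex, distinct edges receiving distinct new vertices. *)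

From mathcomp Require Import all_boot.
Set Implicit Arguments. Unset Strict Implicit. Unset Printing Implicit Defensive.

Section Hyper.
Variable V : finType.

Definition is_3graph (H : {set {set V}}) : Prop :=
  forall e, e \in H -> #|e| = 3.

Definition in_shadow (H : {set {set V}}) (u v : V) : bool :=
  (u != v) && [exists e in H, (u \in e) && (v \in e)].

Definition nbh (H : {set {set V}}) (u v : V) : {set V} :=
  [set w | [set u; v; w] \in H].

Definition codeg (H : {set {set V}}) (u v : V) : nat := #|nbh H u v|.

Definition full (d : nat) (H : {set {set V}}) : Prop :=
  forall u v, in_shadow H u v -> d <= codeg H u v.

(* every edge contains at most one (unordered) pair with codegree < K *)
Definition superfull (d K : nat) (H : {set {set V}}) : Prop :=
  full d H /\
  forall e, e \in H ->
    forall u v x y, u \in e -> v \in e -> x \in e -> y \in e ->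
      u != v -> x != y -> codeg H u v < K -> codeg H x y < K ->
      [set u; v] = [set x; y].

(* H contains a copy of the expansion C_k^3 of the k-cycle:
   distinct core vertices f 0, ..., f (k-1) forming the cycle,
   and distinct new vertices g i (disjoint from the core), with
   {f i, f (i+1 mod k), g i} an edge for all i. *)
Definition contains_C3 (k : nat) (H : {set {set V}}) : Prop :=
  exists (f g : 'I_k -> V),
    [/\ injective f, injective g, (forall i j, f i != g j) &
        forall i, [set f i; f (ordS i); g i] \in H].

End Hyper.

From mathcomp Require Import all_boot zify.
Set Implicit Arguments. Unset Strict Implicit. Unset Printing Implicit Defensive.

(* Every cross pair w1 w2 has codegree t < 3k, so by superfullness every other
   pair inside an edge w1 w2 x is heavy (codegree at least 3k), and x lies
   outside W1 and W2.  Heavy pairs are flexible: a cyclic skeleton made of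
   heavy pairs and of edges whose two outer pairs are heavy extends greedily to
   a copy of C_k^3 as soon as its length is at most k, and at least k once each
   edge is split into its two heavy pairs.
   Suppose u lies in N(a, b) but not in N(a, b').  A path of t cross pairs
   starting with a b', with distinct link vertices avoiding u and closed
   through u, is such a skeleton whenever it can end at a vertex heavy with u:
   at b if t is odd, and at any a2 <> a with u in N(a2, b2) if t is even (and
   symmetrically on the side of b).  So for even t the vertex u lies in no
   cross neighbourhood but N(a, b); for t = 1, i.e. k = 4, the 4-cycles
   through a, b, b' and a second a' are inspected directly.  If the neighbourhoods are not all equal, every cross
   pair therefore owns a private vertex, and an alternating cycle
   a_1 b_1 ... a_t b_t linked by these private vertices is a skeleton of
   length 2t <= k <= 4t. *)

(** * Sequences *)

Lemma exists_mem_notin (T : finType) (A : {set T}) (s : seq T) :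
  size s < #|A| -> exists2 x, x \in A & x \notin s.
Proof.
move=> lt_s_A; have /subsetPn[x xA xNs] : ~~ (A \subset [set x in s]).
  apply: contraTN lt_s_A => /subset_leq_card; rewrite cardsE -leqNgt => le_A_s.
  exact: leq_trans le_A_s (card_size s).
by exists x; rewrite // inE in xNs.
Qed.

Lemma distinct_reps (T : finType) (x0 : T) (F : seq T) (S : nat -> {set T}) n :
  (forall i, i < n -> size F + i < #|S i|) ->
  exists rs, [/\ size rs = n, uniq rs &
    forall i, i < n -> (nth x0 rs i \in S i) && (nth x0 rs i \notin F)].
Proof.
elim: n => [|n IHn] bigS; first by exists [::].
have [|rs [size_rs uniq_rs rsS]] := IHn; first by move=> i /ltnW; apply: bigS.
have [r rS] : exists2 r, r \in S n & r \notin F ++ rs.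
  by apply: exists_mem_notin; rewrite size_cat size_rs bigS.
rewrite mem_cat negb_or => /andP[rNF rNrs].
exists (rcons rs r); split; first by rewrite size_rcons size_rs.
  by rewrite rcons_uniq rNrs.
move=> i; rewrite ltnS leq_eqVlt nth_rcons size_rs => /predU1P[->|lt_in].
  by rewrite ltnn eqxx rS.
by rewrite lt_in rsS.
Qed.

Lemma cycle_nth (T : Type) (e : rel T) (x0 : T) (s : seq T) :
  cycle e s <-> forall i, i < size s -> e (nth x0 s i) (nth x0 s (i.+1 %% size s)).
Proof.
case: s => [|x p] //=; rewrite -(size_rcons p x).
have nthS i : i < size (rcons p x) ->
    nth x0 (rcons p x) i = nth x0 (x :: p) (i.+1 %% size (rcons p x)).
  rewrite size_rcons nth_rcons ltnS leq_eqVlt => /predU1P[->|lt_ip].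
    by rewrite ltnn eqxx modnn.
  by rewrite lt_ip modn_small.
have nth_cons i : i < size (rcons p x) -> nth x0 (x :: rcons p x) i = nth x0 (x :: p) i.
  by rewrite -rcons_cons nth_rcons size_rcons /= => ->.
split=> [/(pathP x0) e_s i lt_i | e_s]; first by rewrite -nthS // -nth_cons // e_s.
by apply/(pathP x0) => i lt_i; rewrite nthS // nth_cons // e_s // size_rcons.
Qed.

Lemma cycle_cons_replace (T U : Type) (f : T -> U) (e : T -> U -> bool) x x' r q :
  f x' = f x -> cycle (fun y z => e y (f z)) (x :: q) ->
  path (fun y z => e y (f z)) x' r -> e (last x' r) (f (head x' q)) ->
  cycle (fun y z => e y (f z)) (x' :: r ++ q).
Proof.
move=> fx' /=; case: q => [|y q] /=; first by rewrite cats0 rcons_path => _ -> ->.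
by rewrite rcons_cat cat_path /= !rcons_path fx' => /and3P[_ -> ->] -> ->.
Qed.

Lemma cycle_edge_inj (T : finType) (x0 : T) (p : seq T) i j :
  uniq p -> 2 < size p -> i < size p -> j < size p ->
  [set nth x0 p i; nth x0 p (i.+1 %% size p)] =
    [set nth x0 p j; nth x0 p (j.+1 %% size p)] -> i = j.
Proof.
move=> uniq_p p_gt2 lt_i lt_j eq_ij.
have nth_inj a b : a < size p -> b < size p -> nth x0 p a = nth x0 p b -> a = b.
  by move=> lt_a lt_b /eqP; rewrite nth_uniq // => /eqP.
have lt_S a : a.+1 %% size p < size p by rewrite ltn_mod; lia.
have modS a : a < size p -> a.+1 %% size p = if a.+1 < size p then a.+1 else 0.
  move=> lt_a; case: ifP => [lt_Sa|/negbT]; first by rewrite modn_small.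
  by rewrite -leqNgt => le_n; rewrite (_ : a.+1 = size p) ?modnn //; lia.
have /set2P[/nth_inj-> //|/nth_inj ij] : nth x0 p i \in [set nth x0 p j; nth x0 p (j.+1 %% size p)].
  by rewrite -eq_ij set21.
have /set2P[/nth_inj ji|/nth_inj ji] :
    nth x0 p (i.+1 %% size p) \in [set nth x0 p j; nth x0 p (j.+1 %% size p)].
  by rewrite -eq_ij set22.
- move: (ij lt_i (lt_S j)) (ji (lt_S i) lt_j); rewrite !modS //.
  by case: ifP; case: ifP; lia.
- move: (ij lt_i (lt_S j)) (ji (lt_S i) (lt_S j)); rewrite !modS //.
  by case: ifP; case: ifP; lia.
Qed.

(** * Skeletons of expanded cycles *)

Section Graph.
Variables (V : finType) (H : {set {set V}}).

Lemma nbhC u v : nbh H u v = nbh H v u.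
Proof. by apply/setP => w; rewrite !inE (setUC [set u]). Qed.

Lemma codegC u v : codeg H u v = codeg H v u.
Proof. by rewrite /codeg nbhC. Qed.

Lemma nbh_uniq : is_3graph H -> forall u v w, w \in nbh H u v -> uniq [:: u; v; w].
Proof.
move=> H3 u v w; rewrite inE => /H3 card3; apply/card_uniqP; rewrite /= -card3 -cardsE.
by apply: eq_card => x; rewrite !inE orbA.
Qed.

Definition heavy (K : nat) (u v : V) : bool := K <= codeg H u v.

Lemma heavyC K u v : heavy K u v = heavy K v u.
Proof. by rewrite /heavy codegC. Qed.

End Graph.

Section Skeleton.
Variables (V : finType) (H : {set {set V}}) (k K : nat).
Hypotheses (k_gt0 : 0 < k) (K_ge2k : 2 * k <= K).

(* A skeleton is a cyclic list of entries (v, o).  With w the vertex of the next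
   entry, (v, Some r) stands for the edge v w r of the copy of C_k^3, and
   (v, None) for a heavy pair v w whose expansion vertex is still to be chosen.
   split_link also requires the outer pairs v r and r w to be heavy, so that
   (v, Some r) may be replaced by the two entries (v, None), (r, None). *)
Definition link (x : V * option V) (w : V) : bool :=
  if x.2 is Some r then r \in nbh H x.1 w else heavy H K x.1 w.

Definition split_link (x : V * option V) (w : V) : bool :=
  if x.2 is Some r then [&& r \in nbh H x.1 w, heavy H K x.1 r & heavy H K r w]
  else heavy H K x.1 w.

Definition skel_cycle (lnk : V * option V -> V -> bool) (s : seq (V * option V)) :=
  cycle (fun x y => lnk x y.1) s.

Definition skel_vertices (s : seq (V * option V)) := pmap snd s ++ map fst s.

Lemma perm_skel_vertices s s' :
  perm_eq s s' -> perm_eq (skel_vertices s) (skel_vertices s').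
Proof. by move=> s_s'; rewrite perm_cat ?perm_pmap ?perm_map. Qed.

Lemma skel_rot_to s x : x \in s ->
  exists2 q : seq (V * option V), perm_eq s (x :: q) &
    forall lnk, skel_cycle lnk (x :: q) = skel_cycle lnk s.
Proof.
case/rot_to => i q rot_s; exists q => [|lnk]; rewrite -rot_s.
  by rewrite perm_sym perm_rot.
exact: rot_cycle.
Qed.

Lemma C3_of_complete_skeleton s :
  size s = k -> size (pmap snd s) = k -> skel_cycle link s ->
  uniq (skel_vertices s) -> contains_C3 k H.
Proof.
case: s => [/= k0|x0 s0]; first by move: k_gt0; rewrite -k0.
set s := x0 :: s0 => size_s full_s cyc_s.
rewrite /skel_vertices cat_uniq => /and3P[uniq_snd disj uniq_fst].
pose f (i : 'I_k) := nth x0.1 (map fst s) i.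
pose g (i : 'I_k) := nth x0.1 (pmap snd s) i.
have sndE i : i < k -> (nth x0 s i).2 = Some (nth x0.1 (pmap snd s) i).
  have all_snd : all (fun x : V * option V => isSome x.2) s.
    by rewrite all_count -size_pmap full_s size_s.
  have := pmapS_filter (@snd V (option V)) s; rewrite (all_filterP all_snd) => snd_s lt_ik.
  by rewrite -(nth_map _ None) ?size_s // -snd_s (nth_map x0.1) ?full_s.
exists f, g; split.
- move=> i j /eqP; rewrite nth_uniq ?size_map ?size_s // => /eqP; exact: val_inj.
- move=> i j /eqP; rewrite nth_uniq ?full_s // => /eqP; exact: val_inj.
- move=> i j; apply: contraNneq disj => fg; apply/hasP; exists (f i).
    by rewrite mem_nth ?size_map ?size_s.
  by rewrite fg mem_nth ?full_s.
- move=> i; have /(cycle_nth _ x0)/(_ i) := cyc_s; rewrite size_s => /(_ (ltn_ord i)).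
  rewrite /link sndE // inE /f /g !(nth_map x0) ?size_s ?ltn_pmod //.
Qed.

Lemma C3_of_link_skeleton s :
  size s = k -> skel_cycle link s -> uniq (skel_vertices s) -> contains_C3 k H.
Proof.
move Dn: (k - size (pmap snd s)) => n; elim: n s Dn => [|n IHn] s Dn size_s cyc_s uniq_s.
  have le_snd_s : size (pmap snd s) <= size s by rewrite size_pmap count_size.
  have full_s : size (pmap snd s) = k by lia.
  exact: C3_of_complete_skeleton full_s cyc_s uniq_s.
have /allPn[[v [//|]] s_vo _] : ~~ all (fun x : V * option V => isSome x.2) s.
  by rewrite all_count -size_pmap size_s; apply/eqP; lia.
have [q s_q cyc_q] := skel_rot_to s_vo; rewrite -cyc_q in cyc_s.
have size_s' : size s = (size q).+1 by rewrite (perm_size s_q).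
have size_snd_s : size (pmap snd s) = size (pmap snd q).
  by rewrite (perm_size (perm_pmap snd s_q)).
rewrite size_snd_s in Dn; rewrite size_s' in size_s.
pose w := (head (v, None) q).1.
have heavy_vw : heavy H K v w by move: cyc_s; rewrite /w; case: (q) => [|y q'] /andP[].
have [r r_vw r_fresh] : exists2 r, r \in nbh H v w & r \notin skel_vertices ((v, None) :: q).
  (* fewer than 2k <= K vertices are in use *)
  apply: exists_mem_notin; apply: leq_trans heavy_vw.
  by rewrite size_cat size_map /=; lia.
apply: (IHn ((v, Some r) :: q)) => //.
- by rewrite /=; lia.
- apply: (@cycle_cons_replace _ _ fst link (v, None) _ [::]) => //=.
  by move: r_vw; rewrite /w /link; case: (q).
- rewrite (perm_uniq (perm_skel_vertices s_q)) in uniq_s.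
  by rewrite [skel_vertices _]/= cons_uniq r_fresh.
Qed.

Lemma C3_of_skeleton s :
  size s <= k <= size s + size (pmap snd s) -> skel_cycle split_link s ->
  uniq (skel_vertices s) -> contains_C3 k H.
Proof.
move Dn: (k - size s) => n; elim: n s Dn => [|n IHn] s Dn /andP[le_s_k le_k_s] cyc_s uniq_s.
  have size_s : size s = k by apply/eqP; rewrite eqn_leq le_s_k -subn_eq0 Dn.
  apply: C3_of_link_skeleton size_s _ uniq_s; apply: sub_cycle cyc_s => x y.
  by rewrite /link /split_link; case: x.2 => // r /andP[].
have [r] : exists r, r \in pmap snd s.
  by case: (pmap snd s) le_k_s => [|r ?]; [rewrite addn0; lia | exists r; rewrite inE eqxx].
rewrite mem_pmap => /mapP[[v o] s_vr /= Eo]; subst o.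
have [q s_q cyc_q] := skel_rot_to s_vr; rewrite -cyc_q in cyc_s.
pose w := (head (v, Some r) q).1.
have /and3P[_ heavy_vr heavy_rw] : split_link (v, Some r) w.
  by case: q {s_q cyc_q} cyc_s @w => [|y q] /andP[].
have size_s : size s = (size q).+1 by rewrite (perm_size s_q).
have size_snd_s : size (pmap snd s) = (size (pmap snd q)).+1.
  by rewrite (perm_size (perm_pmap snd s_q)).
rewrite size_s in Dn le_s_k; rewrite size_s size_snd_s in le_k_s.
apply: (IHn [:: (v, None), (r, None) & q]).
- by rewrite /=; lia.
- by rewrite /=; apply/andP; split; lia.
- apply: (@cycle_cons_replace _ _ fst split_link (v, Some r) _ [:: (r, None)]) => //=.
    by rewrite andbT.
  by move: heavy_rw; rewrite /w; case: (q).
- have split_vr : perm_eq (skel_vertices ((v, Some r) :: q))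
                          (skel_vertices [:: (v, None), (r, None) & q]).
    by rewrite /skel_vertices /= -(cat1s r) perm_catCA perm_cat2l -(cat1s v) perm_catCA.
  by rewrite -(perm_uniq split_vr) -(perm_uniq (perm_skel_vertices s_q)).
Qed.

Lemma C3_of_zip_skeleton (x0 : V) (p : seq V) (ls : seq (option V)) :
  size ls = size p -> size p <= k <= size p + size (pmap id ls) ->
  uniq (pmap id ls ++ p) ->
  (forall i, i < size p ->
     split_link (nth x0 p i, nth None ls i) (nth x0 p (i.+1 %% size p))) ->
  contains_C3 k H.
Proof.
move=> size_ls; have snd_zip : pmap snd (zip p ls) = pmap id ls.
  by elim: p ls size_ls => [|x p IHp] [|[r|] ls] //= [/IHp ->].
have fst_zip : map fst (zip p ls) = p by rewrite -/(unzip1 _) unzip1_zip ?size_ls.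
have size_zip_p : size (zip p ls) = size p by rewrite size_zip size_ls minnn.
move=> size_p uniq_p link_p; apply: (C3_of_skeleton (s := zip p ls)).
- by rewrite size_zip_p snd_zip.
- apply/(cycle_nth _ (x0, None)) => i; rewrite size_zip_p => lt_i.
  by rewrite !nth_zip ?size_ls //; apply: link_p.
- by rewrite /skel_vertices snd_zip fst_zip.
Qed.

End Skeleton.

(** * Cross pairs of codegree t *)

Section CrossPairs.
Variables (V : finType) (H : {set {set V}}) (k : nat) (W1 W2 : {set V}).
Hypotheses (k_ge4 : 4 <= k) (H3 : is_3graph H)
  (H_superfull : superfull ((k - 1)./2) (3 * k) H) (W12 : [disjoint W1 & W2])
  (W1_big : 3 * k <= #|W1|) (W2_big : 3 * k <= #|W2|)
  (codeg_W12 : forall w1 w2, w1 \in W1 -> w2 \in W2 -> codeg H w1 w2 = (k - 1)./2).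

Local Notation t := ((k - 1)./2).
Local Notation heavy := (heavy H (3 * k)).

Lemma t_gt0 : 0 < t. Proof. lia. Qed.
Lemma t_lt3k : t < 3 * k. Proof. lia. Qed.
Lemma detour_size_bounds : t.+2 <= k <= t.+2 + t. Proof. apply/andP; split; lia. Qed.
Lemma cycle_size_bounds : t.*2 <= k <= t.*2 + t.*2. Proof. apply/andP; split; lia. Qed.

Lemma k_eq4 : t = 1 -> k = 4. Proof. lia. Qed.

Definition side (b : bool) : {set V} := if b then W2 else W1.

Lemma side_big b : 3 * k <= #|side b|.
Proof. by case: b. Qed.

Lemma mem_side_cross b x : x \in side b -> x \in side (~~ b) -> False.
Proof.
by move=> xb xNb; move/disjoint_setI0/setP/(_ x): W12; case: b xb xNb; rewrite !inE => -> ->.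
Qed.

Lemma side_neq b x y : x \in side b -> y \in side (~~ b) -> x != y.
Proof. by move=> xb; apply: contraTneq => <-; apply/negP => /(mem_side_cross xb). Qed.

Lemma mem_side_setU b x : x \in side b -> x \in W1 :|: W2.
Proof. by case: b; rewrite inE => ->; rewrite ?orbT. Qed.

Lemma cross_codeg b c d : c \in side b -> d \in side (~~ b) -> codeg H c d = t.
Proof. by case: b => /= cb db; [rewrite codegC|]; apply: codeg_W12. Qed.

Lemma low_pair_heavy c d r : r \in nbh H c d -> codeg H c d < 3 * k -> heavy c r /\ heavy d r.
Proof.
move=> r_cd low_cd; move: (nbh_uniq H3 r_cd); rewrite /= !inE !negb_or andbT.
move=> /andP[/andP[c_d c_r] d_r].
have e_cdr : [set c; d; r] \in H by rewrite inE in r_cd.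
have low_eq x : x \in [set c; d; r] -> x != r -> codeg H x r < 3 * k -> [set c; d] = [set x; r].
  move=> x_e x_r low_xr; apply: (H_superfull.2 _ e_cdr c d x r) => //;
  by rewrite !inE ?eqxx ?orbT.
have r_notin_cd : r \notin [set c; d] by rewrite !inE !(eq_sym r) negb_or c_r d_r.
split; rewrite /heavy leqNgt; apply/negP => low.
- by move: r_notin_cd; rewrite (low_eq c) ?set22 // !inE eqxx.
- by move: r_notin_cd; rewrite (low_eq d) ?set22 // !inE eqxx orbT.
Qed.

Lemma cross_nbh b c d r : c \in side b -> d \in side (~~ b) -> r \in nbh H c d ->
  [/\ r \notin W1 :|: W2, heavy c r & heavy r d].
Proof.
move=> cb db r_cd; have low_cd : codeg H c d < 3 * k by rewrite (cross_codeg cb db) t_lt3k.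
have [heavy_cr heavy_dr] := low_pair_heavy r_cd low_cd; rewrite heavyC in heavy_dr.
split=> //; apply/negP => rW.
have [rb|rNb] : r \in side b \/ r \in side (~~ b) by case: b {cb db} => /=; move/setUP: rW => [];
  by [left | right].
- by move: heavy_dr; rewrite /heavy (cross_codeg rb db) leqNgt t_lt3k.
- by move: heavy_cr; rewrite /heavy (cross_codeg cb rNb) leqNgt t_lt3k.
Qed.

Definition alternating (b : bool) (x0 : V) (p : seq V) (m : nat) :=
  forall i, i <= m -> nth x0 p i \in side (odd i (+) b).

Lemma alternating_step b x0 p m i : alternating b x0 p m -> i < m ->
  nth x0 p i \in side (odd i (+) b) /\ nth x0 p i.+1 \in side (~~ (odd i (+) b)).
Proof. by move=> alt_p lt_im; rewrite -addNb; split; apply: alt_p => //; apply: ltnW. Qed.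

Lemma alternating_path b (x0 x1 z : V) m :
  2 <= m < 3 * k -> x0 \in side b -> x1 \in side (~~ b) -> z \in side (odd m (+) b) ->
  z != x0 -> z != x1 ->
  exists p, [/\ size p = m.+1, uniq p, alternating b x0 p m &
              [/\ nth x0 p 0 = x0, nth x0 p 1 = x1 & nth x0 p m = z]].
Proof.
move=> /andP[m_ge2 m_lt] x0b x1b zm zx0 zx1.
have [|mid [size_mid uniq_mid mid_side]] :=
  distinct_reps x0 (F := [:: x0; x1; z]) (S := fun j => side (odd j (+) b)) (n := m - 2).
  by move=> j lt_j; apply: leq_trans (side_big _); rewrite /=; lia.
have notin_mid y : y \in [:: x0; x1; z] -> y \notin mid.
  move=> yT; apply/(nthP x0) => -[j lt_j nth_j]; rewrite size_mid in lt_j.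
  by case/andP: (mid_side j lt_j); rewrite nth_j yT.
have x0x1 : x0 != x1 by apply/eqP => eq01; apply: (mem_side_cross x0b); rewrite eq01.
exists [:: x0, x1 & rcons mid z]; split=> //.
- by rewrite /= size_rcons size_mid; lia.
- rewrite !cons_uniq rcons_uniq uniq_mid in_cons !mem_rcons !inE !negb_or x0x1.
  by rewrite (eq_sym x0) zx0 (eq_sym x1) zx1 !notin_mid // !inE eqxx ?orbT.
- case=> [|[|j]] //= le_j; rewrite nth_rcons size_mid negbK.
  case: ltngtP => [lt_j|gt_j|->]; first by case/andP: (mid_side j lt_j).
    by move: le_j gt_j; lia.
  by rewrite oddB // addbF.
- split=> //; rewrite -[m in nth _ _ m](subnKC m_ge2) add2n /=.
  by rewrite nth_rcons size_mid ltnn eqxx.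
Qed.

Lemma link_vertices b (x0 u : V) p :
  0 < t -> alternating b x0 p t -> u \notin nbh H (nth x0 p 0) (nth x0 p 1) ->
  exists R, [/\ size R = t, uniq R & forall i, i < t -> let r := nth u R i in
    [/\ r \in nbh H (nth x0 p i) (nth x0 p i.+1), r != u, r \notin W1 :|: W2,
        heavy (nth x0 p i) r & heavy r (nth x0 p i.+1)]].
Proof.
move=> t_gt0 alt_p uN.
have card_nbh i : i < t -> #|nbh H (nth x0 p i) (nth x0 p i.+1)| = t.
  by move=> lt_i; have [pi pSi] := alternating_step alt_p lt_i; apply: cross_codeg pi pSi.
have [|rs [size_rs uniq_rs rs_nbh]] := distinct_reps u (F := [:: u])
    (S := fun i => nbh H (nth x0 p i.+1) (nth x0 p i.+2)) (n := t.-1).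
  by move=> i lt_i; rewrite card_nbh /=; lia.
have [r0 r0_nbh r0_rs] : exists2 r0, r0 \in nbh H (nth x0 p 0) (nth x0 p 1) & r0 \notin rs.
  by apply: exists_mem_notin; rewrite card_nbh // size_rs; lia.
have R_nbh i : i < t ->
    (nth u (r0 :: rs) i \in nbh H (nth x0 p i) (nth x0 p i.+1)) && (nth u (r0 :: rs) i != u).
  case: i => [|i] lt_i /=; first by rewrite r0_nbh; apply: contraNneq uN => <-.
  have lt_i1 : i < t.-1 by lia.
  have /andP[r_nbh r_u] := rs_nbh i lt_i1.
  by rewrite r_nbh; rewrite mem_seq1 in r_u.
exists (r0 :: rs); split; [by rewrite /= size_rs; lia | by rewrite /= r0_rs |] => i lt_i r.
have /andP[r_nbh r_u] := R_nbh i lt_i; have [pi pSi] := alternating_step alt_p lt_i.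
by have [] := cross_nbh pi pSi r_nbh.
Qed.

Lemma C3_of_detour b (x0 x1 z u : V) :
  1 < t -> x0 \in side b -> x1 \in side (~~ b) -> z \in side (odd t (+) b) ->
  z != x0 -> z != x1 -> u \notin W1 :|: W2 -> u \notin nbh H x0 x1 ->
  heavy u x0 -> heavy z u -> contains_C3 k H.
Proof.
move=> t_gt1 x0b x1b zt zx0 zx1 uW uN heavy_u heavy_z.
have [|p [size_p uniq_p alt_p [p0 p1 pt]]] := alternating_path _ x0b x1b zt zx0 zx1.
  by rewrite t_gt1 t_lt3k.
have uNp : u \notin nbh H (nth x0 p 0) (nth x0 p 1) by rewrite p0 p1.
have [R [size_R uniq_R R_link]] := link_vertices t_gt0 alt_p uNp.
have p_W x : x \in p -> x \in W1 :|: W2.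
  by case/(nthP x0) => i lt_i <-; apply: (mem_side_setU (alt_p i _)); rewrite -ltnS -size_p.
(* the skeleton is the cycle x_0 ... x_t u: the t cross pairs carry the link
   vertices R, the two pairs through u are heavy *)
have pmap_ls : pmap id (map Some R ++ [:: None; None]) = R.
  by rewrite pmap_cat (map_pK (g := Some) (f := id)) ?cats0.
apply: (@C3_of_zip_skeleton _ H k (3 * k) _ _ x0 (rcons p u) (map Some R ++ [:: None; None])).
- exact: leq_trans k_ge4.
- by apply: leq_mul.
- by rewrite size_cat size_map size_rcons size_p size_R addn2.
- by rewrite pmap_ls size_rcons size_p size_R detour_size_bounds.
- rewrite pmap_ls cat_uniq rcons_uniq uniq_R uniq_p andbT.
  rewrite andTb; apply/andP; split; last exact: contra (p_W u) uW.
  have R_notW r : r \in R -> (r != u) && (r \notin W1 :|: W2).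
    by case/(nthP u) => i; rewrite size_R => lt_i <-; have [_ -> ->] := R_link i lt_i.
  apply/hasPn => x; rewrite mem_rcons inE => /predU1P[->|/p_W xW];
    by apply/negP => /R_notW; rewrite ?eqxx ?xW ?andbF.
- rewrite size_rcons size_p => i lt_i; rewrite nth_cat !nth_rcons size_map size_R size_p.
  have [lt_it|ge_it] := ltnP i t.
    have [r_nbh _ _ heavy_pr heavy_rp] := R_link i lt_it.
    rewrite modn_small ?ltnS // ltnW // lt_it (nth_map u) ?size_R //.
    by rewrite /split_link /= r_nbh heavy_pr heavy_rp.
  move: lt_i; rewrite ltnS leq_eqVlt => /predU1P[->|lt_i]; last first.
    have -> : i = t by apply/eqP; rewrite eqn_leq -ltnS lt_i ge_it.
    by rewrite ltnSn subnn modn_small // ltnn eqxx /split_link /= pt.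
  by rewrite ltnn eqxx subSnn modnn /split_link /= p0.
Qed.

Lemma cross_nbh_sym b c d r : c \in side b -> d \in side (~~ b) -> r \in nbh H c d ->
  [/\ r \notin W1 :|: W2, r \in nbh H d c, heavy c r && heavy r c & heavy d r && heavy r d].
Proof.
move=> cb db r_cd; have [rW cr rd] := cross_nbh cb db r_cd.
split=> //; [by rewrite nbhC | by rewrite cr heavyC cr | by rewrite rd heavyC rd].
Qed.

Lemma C3_of_square_skeleton s : t = 1 -> size s = 4 ->
  skel_cycle (split_link H (3 * k)) s -> uniq (skel_vertices s) -> contains_C3 k H.
Proof.
move=> t1 size_s; have k4 := k_eq4 t1.
by apply: C3_of_skeleton; rewrite ?k4 ?size_s // leq_mul.
Qed.

Ltac contra_tac := match goal with
  | h1 : is_true (?x \in ?A), h2 : is_true (?x \notin ?A) |- _ => by rewrite h1 in h2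
  | h1 : is_true (?x \in _), h2 : is_true (?x \in _) |- _ => case: (mem_side_cross h1 h2)
  | h : is_true (?x != ?x) |- _ => by rewrite eqxx in h
  end.

Tactic Notation "square_C3" open_constr(sk) :=
  apply (C3_of_square_skeleton (s := sk)); try done;
  rewrite /skel_cycle /split_link /=; repeat (apply/andP; split); try done;
  rewrite /skel_vertices /= ?inE ?negb_or; repeat (apply/andP; split); try done;
  apply/negP => /eqP E; subst; contra_tac.

(* Each coincidence among the link vertices u, u', s, s' of the square a y a' y'
   is bypassed by a 4-cycle using heavy pairs instead. *)
Lemma C3_of_cross_square b (a a' y y' u u' s s' : V) :
  t = 1 -> a \in side b -> a' \in side b -> y \in side (~~ b) -> y' \in side (~~ b) ->
  a' != a -> y != y' -> u != u' ->
  u \in nbh H a y -> u' \in nbh H a y' -> s \in nbh H a' y -> s' \in nbh H a' y' ->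
  contains_C3 k H.
Proof.
move=> t1 ab a'b yb y'b a'a yy' uu' u_ay u'_ay' s_a'y s'_a'y'.
have [uW u_ya /andP[? ?] /andP[? ?]] := cross_nbh_sym ab yb u_ay.
have [u'W u'_y'a /andP[? ?] /andP[? ?]] := cross_nbh_sym ab y'b u'_ay'.
have [sW s_ya' /andP[? ?] /andP[? ?]] := cross_nbh_sym a'b yb s_a'y.
have [s'W s'_y'a' /andP[? ?] /andP[? ?]] := cross_nbh_sym a'b y'b s'_a'y'.
have [aW a'W yW y'W] := And4 (mem_side_setU ab) (mem_side_setU a'b)
                            (mem_side_setU yb) (mem_side_setU y'b).
have [Es|su'] := eqVneq s u'.
  by subst s; square_C3 [:: (a, None); (u, None); (y, None); (u', None)].
have [Es'|s'u] := eqVneq s' u.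
  by subst s'; square_C3 [:: (a, None); (u, None); (y', None); (u', None)].
have [Ess'|ss'] := eqVneq s s'.
  by subst s'; square_C3 [:: (y, Some u); (a, Some u'); (y', None); (s, None)].
have [Es|su] := eqVneq s u.
  subst s; have [Es'|s'u'] := eqVneq s' u'.
    by subst s'; square_C3 [:: (a, None); (u, None); (a', None); (u', None)].
  by square_C3 [:: (a', Some s'); (y', Some u'); (a, None); (u, None)].
have [Es'|s'u'] := eqVneq s' u'.
  by subst s'; square_C3 [:: (a, Some u); (y, Some s); (a', None); (u', None)].
by square_C3 [:: (a, Some u); (y, Some s); (a', Some s'); (y', Some u')].
Qed.

Lemma C3_of_unit_codegree b (a y y' u : V) :
  t = 1 -> a \in side b -> y \in side (~~ b) -> y' \in side (~~ b) ->
  u \in nbh H a y -> u \notin nbh H a y' -> contains_C3 k H.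
Proof.
move=> t1 ab yb y'b u_ay uN_ay'.
have nbh_nonempty c d : c \in side b -> d \in side (~~ b) -> exists x, x \in nbh H c d.
  by move=> cb db; apply/card_gt0P; rewrite -/(codeg H c d) (cross_codeg cb db) t1.
have [a' a'b] : exists2 a', a' \in side b & a' \notin [:: a].
  by apply: exists_mem_notin; apply: leq_trans (side_big b); rewrite (k_eq4 t1).
rewrite inE => a'a; have [u' u'_ay'] := nbh_nonempty _ _ ab y'b.
have [[s s_a'y] [s' s'_a'y']] := (nbh_nonempty _ _ a'b yb, nbh_nonempty _ _ a'b y'b).
apply: (C3_of_cross_square t1 ab a'b yb y'b a'a _ _ u_ay u'_ay' s_a'y s'_a'y').
  by apply: contraNneq uN_ay' => <-.
by apply: contraNneq uN_ay' => ->.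
Qed.

Definition private (r : V) (e : {set V}) : bool :=
  [forall c in W1, forall d in W2, (r \in nbh H c d) ==> ([set c; d] == e)].

Lemma privateP b r e c d : private r e -> c \in side b -> d \in side (~~ b) ->
  r \in nbh H c d -> [set c; d] = e.
Proof.
move=> /forall_inP priv; case: b => /= cb db r_cd; last first.
  by apply/eqP; move/forall_inP: (priv c cb) => /(_ d db); rewrite r_cd.
rewrite setUC; apply/eqP; move/forall_inP: (priv d db) => /(_ c cb).
by rewrite nbhC r_cd.
Qed.

Lemma private_of_pair b r x y :
  (forall c d, c \in side b -> d \in side (~~ b) -> r \in nbh H c d -> c = x /\ d = y) ->
  private r [set x; y].
Proof.
move=> pair_r; apply/forall_inP => c cW; apply/forall_inP => d dW; apply/implyP => r_cd.
case: b pair_r => /= pair_r; last by have [-> ->] := pair_r c d cW dW r_cd.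
have r_dc : r \in nbh H d c by rewrite nbhC.
by have [-> ->] := pair_r d c dW cW r_dc; rewrite setUC.
Qed.

Hypothesis noC3 : ~ contains_C3 k H.

Lemma pivot_nonuniversal_private b (x y y' u : V) :
  x \in side b -> y \in side (~~ b) -> y' \in side (~~ b) ->
  u \in nbh H x y -> u \notin nbh H x y' -> 1 < t /\ private u [set x; y].
Proof.
move=> xb yb y'b u_xy uN_xy'.
have [uW heavy_xu heavy_uy] := cross_nbh xb yb u_xy.
have yy' : y != y' by apply: contraNneq uN_xy' => <-.
have t_gt1 : 1 < t.
  rewrite ltn_neqAle t_gt0 andbT; apply/eqP => t1; apply: noC3.
  exact: C3_of_unit_codegree (esym t1) xb yb y'b u_xy uN_xy'.
have t_even : ~~ odd t.
  apply/negP => t_odd; apply: noC3.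
  apply: (C3_of_detour (x1 := y') (z := y) (u := u) t_gt1 xb y'b) => //.
  - by rewrite t_odd.
  - by rewrite eq_sym (side_neq xb yb).
  - by rewrite heavyC.
  - by rewrite heavyC.
(* for even t the detour from x through y' may end at any vertex of the side of x
   that is heavy with u, and symmetrically for the detour from y *)
have pivot c d : c \in side b -> d \in side (~~ b) -> u \in nbh H c d -> c = x.
  move=> cb db u_cd; apply/eqP/negPn/negP => cx; apply: noC3.
  have [_ heavy_cu _] := cross_nbh cb db u_cd.
  apply: (C3_of_detour (x1 := y') (z := c) (u := u) t_gt1 xb y'b) => //.
  - by rewrite (negbTE t_even).
  - by rewrite (side_neq (b := b)) // negbK.
  - by rewrite heavyC.
split=> //; apply: (private_of_pair (b := b)) => c d cb db u_cd; split; first exact: pivot u_cd.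
apply/eqP/negPn/negP => dy; apply: noC3.
have [x2 x2b] : exists2 x2, x2 \in side b & x2 \notin [:: x].
  by apply: exists_mem_notin; apply: leq_trans (side_big b); apply: ltn_trans t_gt1 t_lt3k.
rewrite inE => x2x; have [_ _ heavy_ud] := cross_nbh cb db u_cd.
apply: (C3_of_detour (b := ~~ b) (x1 := x2) (z := d) (u := u) t_gt1 yb) => //.
- by rewrite negbK.
- by rewrite addbN (negbTE t_even).
- by rewrite eq_sym (side_neq x2b db).
- by apply: contra x2x => u_yx2; apply/eqP; apply: pivot x2b yb _; rewrite nbhC.
- by rewrite heavyC.
Qed.

Lemma nonuniversal_private a b a' b' u :
  a \in W1 -> b \in W2 -> a' \in W1 -> b' \in W2 ->
  u \in nbh H a b -> u \notin nbh H a' b' -> 1 < t /\ private u [set a; b].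
Proof.
move=> aW bW a'W b'W u_ab uN_a'b'.
have [u_ab'|uN_ab'] := boolP (u \in nbh H a b'); last first.
  exact: (pivot_nonuniversal_private (b := false)) aW bW b'W u_ab uN_ab'.
have u_b'a : u \in nbh H b' a by rewrite nbhC.
have uN_b'a' : u \notin nbh H b' a' by rewrite nbhC.
have [t_gt1 priv] := pivot_nonuniversal_private (b := true) b'W aW a'W u_b'a uN_b'a'.
by rewrite (privateP (b := false) priv aW bW u_ab).
Qed.

Lemma alternating_cycle (x0 : V) m : 0 < m -> m.*2 <= 3 * k ->
  exists p, [/\ size p = m.*2, uniq p & forall i, i < m.*2 ->
    nth x0 p i \in side (odd i) /\ nth x0 p (i.+1 %% m.*2) \in side (~~ odd i)].
Proof.
move=> m_gt0 le_2m_3k.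
have [|p [size_p uniq_p p_side]] :=
  distinct_reps x0 (F := [::]) (S := fun i => side (odd i)) (n := m.*2).
  by move=> i lt_i; apply: leq_trans (side_big _); apply: leq_trans lt_i le_2m_3k.
exists p; split=> // i lt_i; have m2_gt0 : 0 < m.*2 by rewrite double_gt0.
case/andP: (p_side i lt_i) => -> _; case/andP: (p_side _ (ltn_pmod i.+1 m2_gt0)) => + _.
by rewrite odd_mod ?odd_double.
Qed.

Lemma private_choice :
  (forall a b, a \in W1 -> b \in W2 -> exists2 r, r \in nbh H a b & private r [set a; b]) ->
  exists rho : V -> V -> V, forall b c d, c \in side b -> d \in side (~~ b) ->
    (rho c d \in nbh H c d) && private (rho c d) [set c; d].
Proof.
move=> priv; exists (fun c d => odflt c [pick r in nbh H c d | private r [set c; d]]).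
move=> b c d cb db; case: pickP => [r /andP[-> ->] //|no_r] /=.
have [r r_cd priv_r] : exists2 r, r \in nbh H c d & private r [set c; d].
  case: b cb db => /= cb db; last exact: priv.
  by have [r ? ?] := priv d c db cb; exists r; [rewrite nbhC | rewrite setUC].
by have := no_r r; rewrite r_cd priv_r.
Qed.

Lemma C3_of_private_links : 1 < t ->
  (forall a b, a \in W1 -> b \in W2 -> exists2 r, r \in nbh H a b & private r [set a; b]) ->
  contains_C3 k H.
Proof.
move=> t_gt1 /private_choice[rho rhoP].
have [x0 _] : exists x0, x0 \in W1.
  by apply/card_gt0P; apply: leq_trans W1_big; apply: leq_trans t_gt0 (ltnW t_lt3k).
have /andP[le_2t_k _] := cycle_size_bounds.
have [|p [size_p uniq_p p_cross]] := alternating_cycle x0 t_gt0.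
  exact: leq_trans le_2t_k (leq_pmull _ _).
pose succ i := nth x0 p (i.+1 %% t.*2).
have R_link i : i < t.*2 -> let r := rho (nth x0 p i) (succ i) in
    [/\ r \in nbh H (nth x0 p i) (succ i), private r [set nth x0 p i; succ i],
        r \notin W1 :|: W2, heavy (nth x0 p i) r & heavy r (succ i)].
  move=> lt_i r; have [pi pSi] := p_cross i lt_i.
  have /andP[r_nbh r_priv] := rhoP _ _ _ pi pSi.
  by have [] := cross_nbh pi pSi r_nbh.
pose R := mkseq (fun i => rho (nth x0 p i) (succ i)) t.*2.
apply: (@C3_of_zip_skeleton _ H k (3 * k) _ _ x0 p (map Some R)).
- exact: leq_trans k_ge4.
- by apply: leq_mul.
- by rewrite size_map size_mkseq size_p.
- by rewrite (map_pK (g := Some) (f := id)) // size_mkseq size_p cycle_size_bounds.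
- rewrite (map_pK (g := Some) (f := id)) // cat_uniq uniq_p andbT; apply/andP; split.
    rewrite map_inj_in_uniq ?iota_uniq // => i j; rewrite !mem_iota !add0n => lt_i lt_j eq_ij.
    have [r_nbh _ _ _ _] := R_link j lt_j; have [_ r_priv _ _ _] := R_link i lt_i.
    have [pj pSj] := p_cross j lt_j; rewrite -eq_ij in r_nbh.
    apply: (cycle_edge_inj (x0 := x0) uniq_p); rewrite ?size_p //.
      by move: t_gt1; rewrite -ltn_double.
    by rewrite -/(succ i) -/(succ j) (privateP r_priv pj pSj r_nbh).
  apply/hasPn => x /(nthP x0)[i]; rewrite size_p => lt_i <-.
  have [/mem_side_setU pW _] := p_cross i lt_i.
  apply: contraL pW => /mapP[j]; rewrite mem_iota => /andP[_ lt_j] ->.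
  by have [] := R_link j lt_j.
- rewrite size_p => i lt_i; rewrite (nth_map x0) ?size_mkseq // nth_mkseq //.
  by have [r_nbh _ _ h_pr h_rs] := R_link i lt_i; rewrite /split_link /= -/(succ i) r_nbh h_pr h_rs.
Qed.

Lemma cross_nbh_disjoint a b : a \in W1 -> b \in W2 -> [disjoint nbh H a b & W1 :|: W2].
Proof.
move=> aW bW; rewrite disjoints_subset; apply/subsetP => x x_ab; rewrite inE.
by have [] := cross_nbh (b := false) aW bW x_ab.
Qed.

Lemma cross_nbh_const a b a' b' : a \in W1 -> b \in W2 -> a' \in W1 -> b' \in W2 ->
  nbh H a b = nbh H a' b'.
Proof.
have nbh_diff c d c' d' : c \in W1 -> d \in W2 -> c' \in W1 -> d' \in W2 ->
    nbh H c d != nbh H c' d' -> exists2 u, u \in nbh H c d & u \notin nbh H c' d'.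
  move=> cW dW c'W d'W neq; suff /subsetPn[u] : ~~ (nbh H c d \subset nbh H c' d') by exists u.
  apply: contra neq => sub; rewrite eqEcard sub /=.
  by move: (codeg_W12 cW dW) (codeg_W12 c'W d'W); rewrite /codeg => -> ->.
move=> aW bW a'W b'W; apply/eqP/negPn/negP => neq; apply: noC3.
have [u u_ab uN] := nbh_diff _ _ _ _ aW bW a'W b'W neq.
have [t_gt1 _] := nonuniversal_private aW bW a'W b'W u_ab uN.
apply: C3_of_private_links t_gt1 _ => c d cW dW.
have [e [f [eW fW neq_cd]]] : exists e f, [/\ e \in W1, f \in W2 & nbh H c d != nbh H e f].
  have [eq_ab|neq_ab] := eqVneq (nbh H c d) (nbh H a b); last by exists a, b.
  by exists a', b'; rewrite eq_ab.
have [v v_cd vN] := nbh_diff _ _ _ _ cW dW eW fW neq_cd.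
by exists v => //; have [_ ->] := nonuniversal_private cW dW eW fW v_cd vN.
Qed.

End CrossPairs.

Theorem lemma2p22 (V : finType) (H : {set {set V}}) (k : nat)
    (W1 W2 : {set V}) :
  4 <= k ->
  is_3graph H ->
  superfull ((k - 1)./2) (3 * k) H ->
  [disjoint W1 & W2] ->
  3 * k <= #|W1| -> 3 * k <= #|W2| ->
  (forall w1 w2, w1 \in W1 -> w2 \in W2 -> codeg H w1 w2 = (k - 1)./2) ->
  ~ contains_C3 k H ->
  exists L : {set V},
    [/\ #|L| = (k - 1)./2, [disjoint L & W1 :|: W2] &
        forall w1 w2, w1 \in W1 -> w2 \in W2 -> nbh H w1 w2 = L].
Proof.
move=> k_ge4 H3 Hsf W12 W1_big W2_big codeg_W12 noC3.
have nonempty (W : {set V}) : 3 * k <= #|W| -> exists w, w \in W.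
  move=> W_big; apply/card_gt0P; apply: leq_trans W_big.
  by rewrite muln_gt0 /=; apply: leq_trans k_ge4.
have [[a0 a0W] [b0 b0W]] := (nonempty W1 W1_big, nonempty W2 W2_big).
exists (nbh H a0 b0); split.
- exact: codeg_W12.
- exact: (cross_nbh_disjoint k_ge4 H3 Hsf W12 W1_big W2_big codeg_W12).
- move=> w1 w2 w1W w2W.
  exact: (cross_nbh_const k_ge4 H3 Hsf W12 W1_big W2_big codeg_W12 noC3).
Qed.
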